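(* Let $p, q$ be integers, let $z$ be a positive integer and let $u$ be an integer. Consider the congruence $$xz \equiv 2^q u + y \pmod{2^p}$$ in the integer unknowns $x, y$. Define $$x_0=\left\lceil\frac{2^q u}{z}\right\rceil,\quad y_0 = z x_0 - 2^q u;\qquad x_1=\left\lfloor\frac{2^q u}{z}\right\rfloor,\quad y_1 = z x_1 - 2^p;\qquad x_2=\left\lfloor\frac{2^q u}{z}\right\rfloor+1,\quad y_2 = z x_2 - 2^p.$$ Then every integer solution $(x,y)$ of the congruence is of the form $$\begin{bmatrix} x\\ y\end{bmatrix}=\begin{bmatrix} x_0+\alpha_1 x_1+\alpha_2 x_2\\ y_0+\alpha_1 y_1+\alpha_2 y_2\end{bmatrix}$$ for some integers $\alpha_1,\alpha_2\in\mathbb{Z}$.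
   Context: This arises from inverting $F(x)=\lfloor ((xz) \bmod 2^p)/2^q\rfloor$: if $F(x)=u$ then $xz \equiv 2^q u + y \pmod{2^p}$ for some integer $y$ with $0\le y<2^q$. Here $a \bmod n$ denotes the nonnegative remainder of $a$ upon division by $n$. *)

From mathcomp Require Import all_boot all_order all_algebra.
Set Implicit Arguments. Unset Strict Implicit. Unset Printing Implicit Defensive.
Import Order.TTheory GRing.Theory Num.Theory.
Local Open Scope ring_scope.

(* floor(a / d) for d > 0: intdiv's Euclidean quotient has a nonnegative
   remainder, so for d > 0 it is exactly the floor. *)
Definition floor_div (a d : int) : int := (a %/ d)%Z.
Definition ceil_div (a d : int) : int := - ((- a) %/ d)%Z.

From mathcomp Require Import all_boot all_order all_algebra.
From mathcomp Require Import ring.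
Import Order.TTheory GRing.Theory Num.Theory.
Local Open Scope ring_scope.

(* Every solution has the form y = x z - 2^q u - k 2^p, so solutions are
   parametrised by (x, k) in Z^2. In these coordinates (x0, y0) is (x0, 0),
   and (x1, y1), (x2, y2) are (x1, 1), (x1 + 1, 1), a basis of Z^2 with
   determinant -1. *)

Lemma affine_lattice_decomposition (R : comRingType) (z c m x0 x1 x k : R) :
  exists a1 a2 : R,
    x = x0 + a1 * x1 + a2 * (x1 + 1) /\
    x * z - c - k * m
      = (z * x0 - c) + a1 * (z * x1 - m) + a2 * (z * (x1 + 1) - m).
Proof.
exists (k - (x - x0 - k * x1)), (x - x0 - k * x1).
by split; ring.
Qed.

Theorem theorem1 (p q : nat) (z u : int) (hz : 0 < z) (x y : int) :
  let x0 := ceil_div (2 ^+ q * u) z in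
  let y0 := z * x0 - 2 ^+ q * u in
  let x1 := floor_div (2 ^+ q * u) z in
  let y1 := z * x1 - 2 ^+ p in
  let x2 := floor_div (2 ^+ q * u) z + 1 in
  let y2 := z * x2 - 2 ^+ p in
  (x * z = 2 ^+ q * u + y %[mod 2 ^+ p])%Z ->
  exists alpha1 alpha2 : int,
    x = x0 + alpha1 * x1 + alpha2 * x2 /\ y = y0 + alpha1 * y1 + alpha2 * y2.
Proof.
move=> x0 y0 x1 y1 x2 y2 /eqP; rewrite eqz_mod_dvd => /dvdzP [k hk].
have -> : y = x * z - 2 ^+ q * u - k * 2 ^+ p by rewrite -hk; ring.
exact: affine_lattice_decomposition.
Qed.
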